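(* Let $n\ge1$ and let $\Phi=\Phi(A,O,Y,\bar{\mathbf d})$ be an $n$-mode Gaussian superchannel, with $A=(a_{kl})$, $Y=(y_{kl})$ and $\bar{\mathbf d}=(\bar d_1,\dots,\bar d_{2n})^{\mathrm T}$. Then $\Phi$ is imaginarity breaking (i.e. $\Phi(\phi)$ is a real Gaussian channel for every $n$-mode Gaussian channel $\phi$) if and only if $\bar d_{2k}=0$, $y_{2k-1,2l}=0$ and $a_{2k,2l-1}=a_{2k,2l}=0$ for all $k,l\in\{1,\dots,n\}$.
   Context: Fix $n\ge1$. Let $\Delta_n=\bigoplus_{k=1}^n\begin{pmatrix}0&1\\-1&0\end{pmatrix}$ and $\Sigma_n=\bigoplus_{k=1}^n\begin{pmatrix}1&0\\0&-1\end{pmatrix}$ (both $2n\times2n$). An $n$-mode Gaussian channel is identified with a triple $\phi=\phi(T,N,\mathbf d)$, where $T=(t_{kl})$ and $N=(n_{kl})$ are real $2n\times 2n$ matrices with $N=N^{\mathrm T}\ge0$, $\mathbf d=(d_1,\dots,d_{2n})^{\mathrm T}\in\mathbb R^{2n}$, and $N+i\Delta_n-iT\Delta_nT^{\mathrm T}\ge0$. Such a channel is called real if $d_{2k}=0$ and $n_{2k-1,2l}=0$ for all $k,l\in\{1,\dots,n\}$, and either $t_{2k,2l-1}=t_{2k,2l}=0$ for all $k,l$, or $t_{2k-1,2l}=t_{2k,2l-1}=0$ for all $k,l$. An $n$-mode Gaussian superchannel is identified with a quadruple $\Phi=\Phi(A,O,Y,\bar{\mathbf d})$ of real $2n\times2n$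 matrices $A,O,Y$ and a vector $\bar{\mathbf d}\in\mathbb R^{2n}$ with $Y=Y^{\mathrm T}$, $OO^{\mathrm T}=I_{2n}$, $Y+i\Delta_n-iA\Delta_nA^{\mathrm T}\ge0$ and $i\Delta_n-iO\Delta_nO^{\mathrm T}\ge0$; it acts on Gaussian channels by $\Phi(\phi(T,N,\mathbf d))=\phi(AT\Sigma_nO^{\mathrm T}\Sigma_n,\ ANA^{\mathrm T}+Y,\ A\mathbf d+\bar{\mathbf d})$. *)

From HB Require Import structures.
From mathcomp Require Import all_boot all_order all_algebra.
From mathcomp Require Import complex.
Set Implicit Arguments. Unset Strict Implicit. Unset Printing Implicit Defensive.
Import Order.TTheory GRing.Theory Num.Theory.
Local Open Scope ring_scope.

(* Indices: the paper's 1-based index m in {1..2n} is the 0-based ordinal m-1.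
   So paper index 2k-1 (odd) <-> 0-based even ordinal, paper 2k <-> 0-based odd. *)

Section Defs.
Variable R : rcfType.
Variable n : nat.
Local Notation N2 := (2 * n)%N.

(* Delta_n = direct sum of n copies of [[0,1],[-1,0]] *)
Definition Delta : 'M[R]_N2 :=
  \matrix_(i, j)
    (if ~~ odd i && (nat_of_ord j == (nat_of_ord i).+1) then 1
     else if odd i && ((nat_of_ord j).+1 == nat_of_ord i) then -1 else 0).

Definition Sigma : 'M[R]_N2 :=
  \matrix_(i, j) (if i == j then (if odd i then -1 else 1) else 0).

Definition cplx (M : 'M[R]_N2) : 'M[R[i]]_N2 := map_mx (fun x => (x%:C)%C) M.

Definition psdC (H : 'M[R[i]]_N2) : Prop :=
  forall v : 'cV[R[i]]_N2, 0 <= ((map_mx Num.conj v)^T *m H *m v) 0 0.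

Definition psdR (M : 'M[R]_N2) : Prop :=
  forall x : 'cV[R]_N2, 0 <= (x^T *m M *m x) 0 0.

Definition uncert (T N : 'M[R]_N2) : 'M[R[i]]_N2 :=
  cplx N + ('i)%C *: cplx Delta - ('i)%C *: cplx (T *m Delta *m T^T).

Definition gaussian_channel (T N : 'M[R]_N2) (d : 'cV[R]_N2) : Prop :=
  N^T = N /\ psdR N /\ psdC (uncert T N).

Definition real_channel (T N : 'M[R]_N2) (d : 'cV[R]_N2) : Prop :=
  gaussian_channel T N d /\
  (forall i : 'I_N2, odd i -> d i 0 = 0) /\
  (forall i j : 'I_N2, ~~ odd i -> odd j -> N i j = 0) /\
  ((forall i j : 'I_N2, odd i -> T i j = 0) \/
   (forall i j : 'I_N2, odd i != odd j -> T i j = 0)).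

Definition gaussian_superchannel (A O Y : 'M[R]_N2) (db : 'cV[R]_N2) : Prop :=
  Y^T = Y /\ O *m O^T = 1%:M /\ psdC (uncert A Y) /\
  psdC (('i)%C *: cplx Delta - ('i)%C *: cplx (O *m Delta *m O^T)).

Definition act_T (A O T : 'M[R]_N2) : 'M[R]_N2 := A *m T *m Sigma *m O^T *m Sigma.
Definition act_N (A Y N : 'M[R]_N2) : 'M[R]_N2 := A *m N *m A^T + Y.
Definition act_d (A : 'M[R]_N2) (db d : 'cV[R]_N2) : 'cV[R]_N2 := A *m d + db.

Definition imaginarity_breaking (A O Y : 'M[R]_N2) (db : 'cV[R]_N2) : Prop :=
  forall (T N : 'M[R]_N2) (d : 'cV[R]_N2), gaussian_channel T N d ->
    real_channel (act_T A O T) (act_N A Y N) (act_d A db d).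

End Defs.

From HB Require Import structures.
From mathcomp Require Import all_boot all_order all_algebra.
From mathcomp Require Import complex.
From mathcomp Require Import zify.
Set Implicit Arguments. Unset Strict Implicit. Unset Printing Implicit Defensive.
Import Order.TTheory GRing.Theory Num.Theory.
Local Open Scope ring_scope.

(* Necessity: feed the superchannel the identity channels phi(1, 0, d).  Their
   images are phi(A Sigma O^T Sigma, Y, A d + dbar); realness for d = 0 forces
   the conditions on dbar and Y, and for d = e_j it kills column j of the odd
   rows of A.
   Sufficiency: vanishing odd rows of A make the odd rows of the output T, the
   odd entries of A d and the (odd, even) entries of A N A^T vanish.  The image
   is still a Gaussian channel: the condition on O says that i(Delta - O Delta O^T)
   is positive semidefinite, and an antisymmetric real K with iK psd is zero, so
   O is symplectic; then T' Delta T'^T = A (T Delta T^T) A^T and the uncertainty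
   matrix of the image is A U(T, N) A^T + U(A, Y), a sum of psd matrices. *)

Section PositiveSemidefinite.
Variables (R : rcfType) (m : nat).
Local Notation toC := (map_mx (real_complex R)).

Definition psd_mx (H : 'M[R[i]]_m) : Prop :=
  forall v : 'cV[R[i]]_m, 0 <= ((map_mx Num.conj v)^T *m H *m v) 0 0.

Lemma conj_real_mx p q (M : 'M[R]_(p, q)) : map_mx Num.conj (toC M) = toC M.
Proof. by apply/matrixP=> i j; rewrite !mxE conj_Creal // complex_real. Qed.

Lemma psd_mxD (H1 H2 : 'M[R[i]]_m) : psd_mx H1 -> psd_mx H2 -> psd_mx (H1 + H2).
Proof. by move=> h1 h2 v; rewrite mulmxDr mulmxDl mxE addr_ge0. Qed.

Lemma psd_mx_congr (X : 'M[R]_m) (H : 'M[R[i]]_m) :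
  psd_mx H -> psd_mx (toC X *m H *m (toC X)^T).
Proof.
move=> h v; have := h ((toC X)^T *m v).
by rewrite map_mxM -map_trmx conj_real_mx trmx_mul trmxK !mulmxA.
Qed.

(* On [e_a + t e_b] the form is [t H a b + t^* H b a], nonnegative for all [t], hence zero. *)
Lemma psd_mx_diag0 (H : 'M[R[i]]_m) : psd_mx H -> (forall i, H i i = 0) -> H = 0.
Proof.
move=> hH hd; apply/matrixP=> a b; rewrite mxE.
pose f t := t * H a b + Num.conj t * H b a.
have f_ge0 t : 0 <= f t.
  have := hH (delta_mx a 0 + t *: delta_mx b 0).
  rewrite map_mxD map_mxZ !map_delta_mx /=.
  rewrite !linearD !linearZ /= !trmx_delta !(mulmxDl, mulmxDr) -!scalemxAl.
  by rewrite -!rowE -!colE !mxE !hd mulr0 addr0 add0r addrC.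
have f0 t : f t = 0.
  have := f_ge0 (- t); rewrite /f rmorphN !mulNr -opprD oppr_ge0 => f_le0.
  by apply/eqP; rewrite eq_le f_le0 f_ge0.
have := f0 1; have := f0 'i%C; rewrite /f rmorph1 !mul1r complexiE conjCi.
move=> /eqP; rewrite mulNr subr_eq0 => /eqP /(mulfI (neq0Ci _)) ->.
by move=> /eqP; rewrite -mulr2n mulrn_eq0 => /eqP.
Qed.

Lemma quad_form_anti0 (K : 'M[R]_m) (x : 'cV[R]_m) : K^T = - K -> (x^T *m K *m x) 0 0 = 0.
Proof.
move=> hK; have : (x^T *m K *m x)^T = - (x^T *m K *m x).
  by rewrite !trmx_mul trmxK hK mulNmx mulmxN mulmxA.
by move=> /(congr1 (fun M : 'M_1 => M 0 0)); rewrite !mxE => /eqP; rewrite eq_sym eqNr => /eqP.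
Qed.

Lemma anti_diag0 (K : 'M[R]_m) i : K^T = - K -> K i i = 0.
Proof.
by move=> /(quad_form_anti0 (delta_mx i 0)); rewrite trmx_delta -rowE -colE !mxE.
Qed.

Lemma trmx_congr_anti (X K : 'M[R]_m) :
  K^T = - K -> (X *m K *m X^T)^T = - (X *m K *m X^T).
Proof. by move=> hK; rewrite !trmx_mul trmxK hK mulNmx mulmxN mulmxA. Qed.

Lemma psd_imag_anti_eq0 (K : 'M[R]_m) : K^T = - K -> psd_mx ('i%C *: toC K) -> K = 0.
Proof.
move=> hK /psd_mx_diag0 hK0; apply/matrixP=> a b.
have /hK0 /matrixP /(_ a b) : forall i, ('i%C *: toC K) i i = 0.
  by move=> i; rewrite !mxE anti_diag0 // mulr0.
by rewrite !mxE => /eqP; rewrite mulf_eq0 (negbTE (neq0Ci _)) => /eqP /complexI.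
Qed.

Lemma psd_real_part (N K : 'M[R]_m) :
  K^T = - K -> psd_mx (toC N + 'i%C *: toC K) -> forall x : 'cV[R]_m, 0 <= (x^T *m N *m x) 0 0.
Proof.
move=> hK hNK x; have := hNK (toC x).
rewrite conj_real_mx mulmxDr -scalemxAr mulmxDl -scalemxAl.
rewrite map_trmx -!map_mxM [fun_of_matrix (_ + _) _ _]mxE
  [fun_of_matrix (_ *: _) _ _]mxE ![fun_of_matrix (map_mx _ _) _ _]mxE.
by rewrite (quad_form_anti0 _ hK) mulr0 addr0 ler0c.
Qed.

End PositiveSemidefinite.

Lemma mulmx_row0 (F : pzSemiRingType) p q r (A : 'M[F]_(p, q)) (B : 'M[F]_(q, r)) i j :
  (forall k, A i k = 0) -> (A *m B) i j = 0.
Proof. by move=> hA; rewrite mxE big1 // => k _; rewrite hA mul0r. Qed.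

Section GaussianChannels.
Variables (R : rcfType) (n : nat).
Local Notation N2 := (2 * n)%N.
Local Notation Delta := (Delta R n).
Local Notation Sigma := (Sigma R n).

Lemma trmx_Delta : Delta^T = - Delta.
Proof.
apply/matrixP=> i j; rewrite !mxE.
have [-> | _] := eqVneq (nat_of_ord i) j.+1.
  have -> : (j.+2 == j) = false by apply/eqP; lia.
  have -> : (nat_of_ord j == j.+2) = false by apply/eqP; lia.
  by rewrite oddS; case: (odd j); rewrite /= ?opprK ?oppr0.
have [-> | _] := eqVneq (nat_of_ord j) i.+1.
  by rewrite oddS; case: (odd i); rewrite /= ?opprK ?oppr0.
by rewrite !andbF oppr0.
Qed.

Lemma trmx_Sigma : Sigma^T = Sigma.
Proof. by apply/matrixP=> i j; rewrite !mxE eq_sym; case: eqP => // ->. Qed.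

Lemma Sigma_Delta_Sigma : Sigma *m Delta *m Sigma = - Delta.
Proof.
have -> : Sigma = diag_mx (\row_i (if odd i then -1 else 1)).
  by apply/matrixP=> i j; rewrite !mxE; case: eqVneq => [->|]; rewrite ?mulr1n ?mulr0n.
rewrite mul_diag_mx mul_mx_diag; apply/matrixP=> i j; rewrite !mxE.
have [-> | _] := eqVneq (nat_of_ord j) i.+1.
  have -> : (i.+2 == i) = false by apply/eqP; lia.
  by rewrite oddS; case: (odd i); rewrite /= ?(mulN1r, mulr1, mul1r, opprK).
have [-> | _] := eqVneq (nat_of_ord i) j.+1.
  by rewrite oddS; case: (odd j); rewrite /= ?(mulN1r, mulrN1, mulr1, mul1r, opprK).
by rewrite !andbF mulr0 mul0r oppr0.
Qed.

Lemma uncertE (T N : 'M[R]_N2) :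
  uncert T N = cplx N + 'i%C *: cplx (Delta - T *m Delta *m T^T).
Proof. by rewrite /uncert /cplx map_mxB scalerBr addrA. Qed.

Lemma trmx_Delta_defect (T : 'M[R]_N2) :
  (Delta - T *m Delta *m T^T)^T = - (Delta - T *m Delta *m T^T).
Proof. by rewrite linearB /= trmx_Delta (trmx_congr_anti _ trmx_Delta) opprD. Qed.

Lemma psdR_of_uncert (T N : 'M[R]_N2) : psdC (uncert T N) -> psdR N.
Proof. by rewrite uncertE; apply: psd_real_part; apply: trmx_Delta_defect. Qed.

Lemma symplectic_of_psd (O : 'M[R]_N2) :
  psdC ('i%C *: cplx Delta - 'i%C *: cplx (O *m Delta *m O^T)) ->
  O *m Delta *m O^T = Delta.
Proof.
rewrite -scalerBr -map_mxB => /(psd_imag_anti_eq0 (trmx_Delta_defect O)) /eqP.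
by rewrite subr_eq0 eq_sym => /eqP.
Qed.

Lemma symplectic_trmx (O : 'M[R]_N2) :
  O *m O^T = 1%:M -> O *m Delta *m O^T = Delta -> O^T *m Delta *m O = Delta.
Proof.
move=> orthO symO; have orthOT := mulmx1C orthO.
by rewrite -{1}symO !mulmxA orthOT mul1mx -mulmxA orthOT mulmx1.
Qed.

Lemma act_T_Delta (A O T : 'M[R]_N2) :
  O *m O^T = 1%:M -> O *m Delta *m O^T = Delta ->
  act_T A O T *m Delta *m (act_T A O T)^T = A *m (T *m Delta *m T^T) *m A^T.
Proof.
move=> orthO symO.
have SDS X : Sigma *m (Delta *m (Sigma *m X)) = - (Delta *m X).
  by rewrite !mulmxA Sigma_Delta_Sigma mulNmx.
have OTDO X : O^T *m (Delta *m (O *m X)) = Delta *m X.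
  by rewrite !mulmxA symplectic_trmx.
by rewrite /act_T !trmx_mul !trmxK trmx_Sigma -!mulmxA SDS mulmxN OTDO mulmxN SDS opprK.
Qed.

Lemma uncert_act (A O Y T N : 'M[R]_N2) :
  O *m O^T = 1%:M -> O *m Delta *m O^T = Delta ->
  uncert (act_T A O T) (act_N A Y N) = cplx A *m uncert T N *m (cplx A)^T + uncert A Y.
Proof.
move=> orthO symO; rewrite !uncertE act_T_Delta // /act_N /cplx.
rewrite mulmxDr mulmxDl -scalemxAr -scalemxAl map_trmx -!map_mxM.
rewrite addrACA -scalerDr -!map_mxD; congr (_ + _ *: map_mx _ _).
by rewrite mulmxBr mulmxBl [RHS]addrC addrA subrK.
Qed.

Lemma gaussian_channel_id (d : 'cV[R]_N2) : gaussian_channel 1%:M 0 d.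
Proof.
have uncert_id : uncert 1%:M 0 = 0 :> 'M[R[i]]_N2.
  by rewrite uncertE mul1mx trmx1 mulmx1 subrr /cplx !map_mx0 scaler0 addr0.
split; first exact: trmx0.
by split=> v; rewrite ?uncert_id ?mulmx0 mul0mx mxE.
Qed.

Lemma gaussian_channel_act (A O Y T N : 'M[R]_N2) (db d : 'cV[R]_N2) :
  gaussian_superchannel A O Y db -> gaussian_channel T N d ->
  gaussian_channel (act_T A O T) (act_N A Y N) (act_d A db d).
Proof.
move=> [symY [orthO [psdAY /symplectic_of_psd symO]]] [symN [_ psdTN]].
have psd_act : psdC (uncert (act_T A O T) (act_N A Y N)).
  by rewrite uncert_act //; apply: psd_mxD psdAY; apply: psd_mx_congr.
split; first by rewrite /act_N linearD /= !trmx_mul trmxK symN symY mulmxA.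
by split; first exact: psdR_of_uncert psd_act.
Qed.

End GaussianChannels.

Lemma imaginarity_breaking_necessary (R : rcfType) (n : nat)
  (A O Y : 'M[R]_(2 * n)) (db : 'cV[R]_(2 * n)) :
  imaginarity_breaking A O Y db ->
  [/\ forall i : 'I_(2 * n), odd i -> db i 0 = 0,
      forall i j : 'I_(2 * n), ~~ odd i -> odd j -> Y i j = 0 &
      forall i j : 'I_(2 * n), odd i -> A i j = 0].
Proof.
move=> hPhi; have [_ [d0 [N0 _]]] := hPhi _ _ _ (gaussian_channel_id 0).
have db_odd (i : 'I_(2 * n)) : odd i -> db i 0 = 0 by move/d0; rewrite /act_d mulmx0 add0r.
split=> // [i j hi hj | i j hi].
  by have := N0 i j hi hj; rewrite /act_N mulmx0 mul0mx add0r.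
have [_ [dj _]] := hPhi _ _ _ (gaussian_channel_id (delta_mx j 0)).
by have := dj i hi; rewrite /act_d -colE mxE db_odd // addr0 mxE.
Qed.

Lemma imaginarity_breaking_sufficient (R : rcfType) (n : nat)
  (A O Y : 'M[R]_(2 * n)) (db : 'cV[R]_(2 * n)) :
  gaussian_superchannel A O Y db ->
  (forall i : 'I_(2 * n), odd i -> db i 0 = 0) ->
  (forall i j : 'I_(2 * n), ~~ odd i -> odd j -> Y i j = 0) ->
  (forall i j : 'I_(2 * n), odd i -> A i j = 0) ->
  imaginarity_breaking A O Y db.
Proof.
move=> hPhi db_odd Y_eo A_odd T N d hphi.
split; first exact: gaussian_channel_act.
split=> [i hi | ].
  by rewrite /act_d mxE db_odd // addr0 mulmx_row0 // => k; apply: A_odd.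
split=> [i j hi hj | ].
  rewrite /act_N mxE Y_eo // addr0 mxE big1 // => k _.
  by rewrite [fun_of_matrix A^T _ _]mxE A_odd ?mulr0.
by left=> i j hi; rewrite /act_T -!mulmxA mulmx_row0 // => k; apply: A_odd.
Qed.

Theorem theorem2 (R : rcfType) (n : nat) (hn : (1 <= n)%N)
  (A O Y : 'M[R]_(2 * n)) (db : 'cV[R]_(2 * n)) :
  gaussian_superchannel A O Y db ->
  (imaginarity_breaking A O Y db <->
   ((forall i : 'I_(2 * n), odd i -> db i 0 = 0) /\
    (forall i j : 'I_(2 * n), ~~ odd i -> odd j -> Y i j = 0) /\
    (forall i j : 'I_(2 * n), odd i -> A i j = 0))).
Proof.
move=> hPhi; split.
  by move=> /imaginarity_breaking_necessary [].
by move=> [db_odd [Y_eo A_odd]]; apply: imaginarity_breaking_sufficient.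
Qed.
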